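(* Let $d\ge1$, $\lambda,R,B>0$, let $(x_s,y_s)_{s\ge1}$ satisfy $\|x_s\|\le R$, $y_s\in\{-1,1\}$, let $t\ge1$, and let $\Omega_t$ and its minimizer $\omega_t\in\mathbb R^{p_t}$ be as defined in the context. Let $\epsilon,\gamma>0$, $T\in\mathbb N$, and define $\omega_t^0=0$ and $\omega_t^i=\omega_t^{i-1}-\gamma\nabla\Omega_t(\omega_t^{i-1})$ for $i=1,\dots,T$. If \[\gamma=\frac{\lambda}{4\lambda+R^2},\qquad T\ge\left(4+\frac{R^2}{\lambda}\right)\log\frac{Rt}{\epsilon\sqrt\lambda},\] then $\|\omega_t^T-\omega_t\|\le\epsilon$.
   Context: Logistic loss $\ell(z,y)=\log(1+e^{-yz})$, $\ell_s(\theta)=\ell(\theta^\top x_s,y_s)$. Let $\hat\theta_s$ be the AIOLI forecasts: for $s<t$, $g_s=\nabla\ell_s(\hat\theta_s)$, $\eta_s=e^{y_s\hat\theta_s^\top x_s}/(1+BR)$, $\hat\ell_s(\theta)=\ell_s(\hat\theta_s)+g_s^\top(\theta-\hat\theta_s)+\frac{\eta_s}{2}(\theta-\hat\theta_s)^\top g_sg_s^\top(\theta-\hat\theta_s)$, and $\hat\theta_t=\arg\min_\theta\{\sum_{s<t}\hat\ell_s(\theta)+\ell(\theta^\top x_t,1)+\ell(\theta^\top x_t,-1)+\lambda\|\theta\|^2\}$. Let $A_{t-1}=\lambda I+\frac12\sum_{s=1}^{t-1}\eta_sg_sg_s^\top$, $b_{t-1}=\frac12\sum_{s=1}^{t-1}(\eta_sg_s^\top\hat\theta_s-1)g_s$,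 $L_{t-1}$ the lower-triangular Cholesky factor of $A_{t-1}$, $W_t=L_{t-1}^{-1}(b_{t-1},x_t)\in\mathbb R^{d\times2}$ of rank $p_t\in\{1,2\}$, $W_t^\top W_t=U_t\Sigma_tU_t^\top$ its economic eigendecomposition ($U_t\in\mathbb R^{2\times p_t}$ with orthonormal columns, $\Sigma_t$ positive diagonal), $u_t=\Sigma_t^{1/2}U_t^\top e_1$, $v_t=\Sigma_t^{1/2}U_t^\top e_2$ with $e_1=(1,0),e_2=(0,1)$, and \[\Omega_t(\omega)=\|\omega\|^2-2u_t^\top\omega+\log(1+e^{-v_t^\top\omega})+\log(1+e^{v_t^\top\omega}),\quad\omega\in\mathbb R^{p_t},\] with unique minimizer $\omega_t$. *)

From HB Require Import structures.
From mathcomp Require Import all_boot all_order all_algebra.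
From mathcomp Require Import all_classical all_reals.
From mathcomp Require Import all_analysis.
Set Implicit Arguments. Unset Strict Implicit. Unset Printing Implicit Defensive.
Import Order.TTheory GRing.Theory Num.Theory.
Import numFieldNormedType.Exports.
Local Open Scope ring_scope.

Section AIOLI.
Variable R : realType.

Definition dotc n (u v : 'cV[R]_n) : R := \sum_i u i 0 * v i 0.
Definition enorm n (v : 'cV[R]_n) : R := Num.sqrt (dotc v v).

Definition grad n (f : 'cV[R]_n -> R) (x : 'cV[R]_n) : 'cV[R]_n :=
  \col_i ('D_(delta_mx i 0) f x : R).

Definition logloss (z y : R) : R := ln (1 + expR (- (y * z))).


Definition loss_s (d : nat) (lam Rb B : R) (x : nat -> 'cV[R]_d) (y : nat -> R) (thhat : nat -> 'cV[R]_d) (s : nat) (th : 'cV[R]_d) : R := logloss (dotc th (x s)) (y s).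


Definition g_s (d : nat) (lam Rb B : R) (x : nat -> 'cV[R]_d) (y : nat -> R) (thhat : nat -> 'cV[R]_d) (s : nat) : 'cV[R]_d := grad ((loss_s lam Rb B x y thhat) s) (thhat s).
Definition eta_s (d : nat) (lam Rb B : R) (x : nat -> 'cV[R]_d) (y : nat -> R) (thhat : nat -> 'cV[R]_d) (s : nat) : R :=
  expR (y s * dotc (thhat s) (x s)) / (1 + B * Rb).

Definition lhat (d : nat) (lam Rb B : R) (x : nat -> 'cV[R]_d) (y : nat -> R) (thhat : nat -> 'cV[R]_d) (s : nat) (th : 'cV[R]_d) : R :=
  (loss_s lam Rb B x y thhat) s (thhat s) + dotc ((g_s lam Rb B x y thhat) s) (th - thhat s)
  + (eta_s lam Rb B x y thhat) s / 2 * (dotc ((g_s lam Rb B x y thhat) s) (th - thhat s)) ^+ 2.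

Definition aioli_obj (d : nat) (lam Rb B : R) (x : nat -> 'cV[R]_d) (y : nat -> R) (thhat : nat -> 'cV[R]_d) (t : nat) (th : 'cV[R]_d) : R :=
  \sum_(1 <= s < t) (lhat lam Rb B x y thhat) s th
  + logloss (dotc th (x t)) 1 + logloss (dotc th (x t)) (-1)
  + lam * enorm th ^+ 2.

Definition is_aioli_forecasts (d : nat) (lam Rb B : R) (x : nat -> 'cV[R]_d) (y : nat -> R) (thhat : nat -> 'cV[R]_d) : Prop :=
  forall t, (1 <= t)%N -> forall th, (aioli_obj lam Rb B x y thhat) t (thhat t) <= (aioli_obj lam Rb B x y thhat) t th.

(* A_{t-1}, b_{t-1} *)
Definition Amat (d : nat) (lam Rb B : R) (x : nat -> 'cV[R]_d) (y : nat -> R) (thhat : nat -> 'cV[R]_d) (t : nat) : 'M[R]_d :=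
  lam%:M + 2^-1 *: \sum_(1 <= s < t) ((eta_s lam Rb B x y thhat) s *: ((g_s lam Rb B x y thhat) s *m ((g_s lam Rb B x y thhat) s)^T)).
Definition bvec (d : nat) (lam Rb B : R) (x : nat -> 'cV[R]_d) (y : nat -> R) (thhat : nat -> 'cV[R]_d) (t : nat) : 'cV[R]_d :=
  2^-1 *: \sum_(1 <= s < t) (((eta_s lam Rb B x y thhat) s * dotc ((g_s lam Rb B x y thhat) s) (thhat s) - 1) *: (g_s lam Rb B x y thhat) s).

Definition is_cholesky (d : nat) (A L : 'M[R]_d) : Prop :=
  is_trig_mx L /\ (forall i, 0 < L i i) /\ L *m L^T = A.

Definition Wmat (d : nat) (lam Rb B : R) (x : nat -> 'cV[R]_d) (y : nat -> R) (thhat : nat -> 'cV[R]_d) (t : nat) (L : 'M[R]_d) : 'M[R]_(d, 2) :=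
  invmx L *m row_mx ((bvec lam Rb B x y thhat) t) (x t).

End AIOLI.

Section Omega.
Variable R : realType.

Definition is_econ_eig p (M : 'M[R]_2) (U : 'M[R]_(2, p)) (sig : 'rV[R]_p) : Prop :=
  U^T *m U = 1%:M /\ (forall i, 0 < sig 0 i) /\ M = U *m diag_mx sig *m U^T.

Definition uvec p (U : 'M[R]_(2, p)) (sig : 'rV[R]_p) (k : 'I_2) : 'cV[R]_p :=
  diag_mx (map_mx Num.sqrt sig) *m U^T *m delta_mx k 0.

Definition Omega p (u v : 'cV[R]_p) (w : 'cV[R]_p) : R :=
  enorm w ^+ 2 - 2 * dotc u w
  + ln (1 + expR (- dotc v w)) + ln (1 + expR (dotc v w)).

Definition gd_iter p (f : 'cV[R]_p -> R) (gam : R) (i : nat) : 'cV[R]_p :=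
  iter i (fun w => w - gam *: grad f w) 0.

End Omega.

From HB Require Import structures.
From mathcomp Require Import all_boot all_order all_algebra.
From mathcomp Require Import all_classical all_reals.
From mathcomp Require Import all_analysis.
From mathcomp Require Import ring lra.
Import Order.TTheory GRing.Theory Num.Theory.
Import numFieldNormedType.Exports.
Local Open Scope ring_scope.

(* The gradient of Omega is 2 w - 2 u + tanh ((v.w) / 2) v, and tanh (./2) is
   nondecreasing and 1/2-Lipschitz.  Hence a gradient step of size g sends a
   difference d = w - w' to (1 - 2g) d - g k (v.d) v for some k in [0, 1/2],
   which is a contraction of ratio 1 - 2g as soon as g |v|^2 <= 4 (1 - 2g).
   The minimiser is a fixed point of the step and, pairing the stationarity
   equation with it, has norm at most |u|; so |w^T - w*| <= (1 - 2g)^T |u|.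
   Since A_{t-1} >= lam I, |L^-1 z| <= |z| / sqrt lam; this gives
   |v|^2 <= R^2 / lam and |u| <= |b_{t-1}| / sqrt lam <= R t / sqrt lam, each
   summand of b_{t-1} having norm at most 2R.  With the given g and T,
   (1 - 2g)^T <= exp (- g T) <= eps sqrt lam / (R t). *)

Section Euclidean.
#[local] Set Implicit Arguments.
#[local] Unset Strict Implicit.
Context {R : realType}.
Implicit Types (n : nat) (k : R).

Lemma dotcE n (a b : 'cV[R]_n) : dotc a b = (a^T *m b) 0 0.
Proof. by rewrite mxE; apply: eq_bigr => i _; rewrite mxE. Qed.

Lemma dotcC n (a b : 'cV[R]_n) : dotc a b = dotc b a.
Proof. by apply: eq_bigr => i _; rewrite mulrC. Qed.

Lemma dotcDl n (a b c : 'cV[R]_n) : dotc (a + b) c = dotc a c + dotc b c.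
Proof. by rewrite /dotc -big_split; apply: eq_bigr => i _; rewrite !mxE mulrDl. Qed.

Lemma dotcZl n k (a c : 'cV[R]_n) : dotc (k *: a) c = k * dotc a c.
Proof. by rewrite /dotc mulr_sumr; apply: eq_bigr => i _; rewrite !mxE mulrA. Qed.

Lemma dotcBl n (a b c : 'cV[R]_n) : dotc (a - b) c = dotc a c - dotc b c.
Proof. by rewrite -scaleN1r dotcDl dotcZl mulN1r. Qed.

Lemma dotcDr n (a b c : 'cV[R]_n) : dotc c (a + b) = dotc c a + dotc c b.
Proof. by rewrite !(dotcC c) dotcDl. Qed.

Lemma dotcZr n k (a c : 'cV[R]_n) : dotc c (k *: a) = k * dotc c a.
Proof. by rewrite !(dotcC c) dotcZl. Qed.

Lemma dotcBr n (a b c : 'cV[R]_n) : dotc c (a - b) = dotc c a - dotc c b.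
Proof. by rewrite !(dotcC c) dotcBl. Qed.

Lemma dotc0l n (c : 'cV[R]_n) : dotc 0 c = 0.
Proof. by rewrite -(scale0r 0) dotcZl mul0r. Qed.

Lemma dotc0r n (c : 'cV[R]_n) : dotc c 0 = 0.
Proof. by rewrite dotcC dotc0l. Qed.

Lemma dotc_delta n (i : 'I_n) (w : 'cV[R]_n) : dotc (delta_mx i 0) w = w i 0.
Proof.
rewrite /dotc (bigD1 i) //= big1 ?addr0; first by rewrite mxE !eqxx mul1r.
by move=> j /negPf ji; rewrite mxE ji mul0r.
Qed.

Lemma dotc_mulmxl n m (M : 'M[R]_(n, m)) (a : 'cV[R]_m) (b : 'cV[R]_n) :
  dotc (M *m a) b = dotc a (M^T *m b).
Proof. by rewrite !dotcE trmx_mul mulmxA. Qed.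

Lemma dotc_ge0 n (a : 'cV[R]_n) : 0 <= dotc a a.
Proof. by apply: sumr_ge0 => i _; rewrite -expr2 sqr_ge0. Qed.

Lemma dotc_eq0 n (a : 'cV[R]_n) : dotc a a = 0 -> a = 0.
Proof.
move=> /eqP; rewrite psumr_eq0 => [/allP a0|i _]; last by rewrite -expr2 sqr_ge0.
apply/matrixP => i j; rewrite ord1 mxE.
by have := a0 i (mem_index_enum _); rewrite -expr2 sqrf_eq0 => /eqP.
Qed.

Lemma cauchy_schwarz n (a b : 'cV[R]_n) : dotc a b ^+ 2 <= dotc a a * dotc b b.
Proof.
have [a0|an0] := eqVneq (dotc a a) 0.
  by rewrite (dotc_eq0 a0) !dotc0l mul0r expr2 mul0r.
have aa_gt0 : 0 < dotc a a by rewrite lt_def an0 dotc_ge0.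
have := dotc_ge0 (dotc a a *: b - dotc a b *: a).
rewrite !(dotcBl, dotcBr, dotcZl, dotcZr) (dotcC b a) => H.
have : 0 <= dotc a a * (dotc a a * dotc b b - dotc a b ^+ 2).
  by apply: le_trans H _; rewrite le_eqVlt; apply/orP; left; apply/eqP; ring.
by rewrite pmulr_rge0 // subr_ge0.
Qed.

Lemma enorm_ge0 n (a : 'cV[R]_n) : 0 <= enorm a.
Proof. exact: sqrtr_ge0. Qed.

Lemma enorm_sqr n (a : 'cV[R]_n) : enorm a ^+ 2 = dotc a a.
Proof. by rewrite /enorm sqr_sqrtr // dotc_ge0. Qed.

Lemma enorm0 n : enorm (0 : 'cV[R]_n) = 0.
Proof. by rewrite /enorm dotc0l sqrtr0. Qed.

Lemma ler_enorm n (w w' : 'cV[R]_n) : dotc w w <= dotc w' w' -> enorm w <= enorm w'.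
Proof. exact: ler_wsqrtr. Qed.

Lemma dotc_le_enorm n (a b : 'cV[R]_n) : dotc a b <= enorm a * enorm b.
Proof.
rewrite /enorm -sqrtrM ?dotc_ge0 //; apply: le_trans (ler_norm _) _.
by rewrite -sqrtr_sqr ler_sqrt ?cauchy_schwarz // mulr_ge0 ?dotc_ge0.
Qed.

Lemma enormD n (a b : 'cV[R]_n) : enorm (a + b) <= enorm a + enorm b.
Proof.
have ab_ge0 : 0 <= enorm a + enorm b by rewrite addr_ge0 ?enorm_ge0.
rewrite -[leRHS]ger0_norm // -sqrtr_sqr /enorm ler_sqrt ?sqr_ge0 //.
rewrite sqrrD -!/(enorm _) !enorm_sqr dotcDl !dotcDr (dotcC b a).
have := dotc_le_enorm a b; lra.
Qed.

Lemma enormZ n k (a : 'cV[R]_n) : enorm (k *: a) = `|k| * enorm a.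
Proof. by rewrite /enorm dotcZl dotcZr mulrA -expr2 sqrtrM ?sqr_ge0 // sqrtr_sqr. Qed.

Lemma enormN n (a : 'cV[R]_n) : enorm (- a) = enorm a.
Proof. by rewrite -scaleN1r enormZ normrN normr1 mul1r. Qed.

Lemma enorm_sum n (m p : nat) (F : nat -> 'cV[R]_n) :
  enorm (\sum_(m <= s < p) F s) <= \sum_(m <= s < p) enorm (F s).
Proof.
elim/big_ind2: _ => [|a1 b1 a2 b2 h1 h2|//]; first by rewrite enorm0.
by apply: le_trans (enormD _ _) _; apply: lerD.
Qed.

End Euclidean.

Section Sigmoid.
Local Open Scope classical_set_scope.
Local Open Scope ring_scope.
Context {R : realType}.
Implicit Types z w : R.

Definition sigmoid z : R := expR z / (1 + expR z).

(* [tanh_half z] is tanh (z / 2). *)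
Definition tanh_half z : R := 1 - 2 / (1 + expR z).

Lemma sigmoidNE z : sigmoid (- z) = (1 + expR z)^-1.
Proof.
have e_gt0 := expR_gt0 z.
have e0 : expR z != 0 by rewrite gt_eqF.
have e1 : 1 + expR z != 0 by rewrite gt_eqF // addr_gt0.
by rewrite /sigmoid expRN; field; rewrite e1 e0.
Qed.

Lemma sigmoidE z : sigmoid z = 1 - (1 + expR z)^-1.
Proof.
have e1 : 1 + expR z != 0 by rewrite gt_eqF // addr_gt0 ?expR_gt0.
by rewrite /sigmoid; field.
Qed.

Lemma sigmoid_ge0 z : 0 <= sigmoid z.
Proof. by rewrite divr_ge0 ?expR_ge0 // addr_ge0 ?expR_ge0. Qed.

Lemma sigmoid_le1 z : sigmoid z <= 1.
Proof. by rewrite sigmoidE gerBl invr_ge0 addr_ge0 ?expR_ge0. Qed.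

Lemma sigmoid_subN z : sigmoid z - sigmoid (- z) = tanh_half z.
Proof. by rewrite sigmoidE sigmoidNE /tanh_half; ring. Qed.

Lemma expR_sigmoidN z : expR z * sigmoid (- z) = sigmoid z.
Proof. by rewrite sigmoidNE. Qed.

Lemma sigmoidN_mul_le1 z : 0 <= z -> sigmoid (- z) * z <= 1.
Proof.
move=> z_ge0; rewrite sigmoidNE mulrC ler_pdivrMr ?addr_gt0 ?expR_gt0 // mul1r.
have := expR_ge1Dx z; lra.
Qed.

(* [sigmoid z * sigmoid (- z)] is symmetric in [z] and decays like [expR (- `|z|)]. *)
Lemma sigmoid_sigmoidN_abs_le1 z : sigmoid z * sigmoid (- z) * `|z| <= 1.
Proof.
wlog z_ge0 : z / 0 <= z => [H|].
  case: (lerP 0 z) => [/H //|/ltW]; rewrite -oppr_ge0 => /H.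
  by rewrite opprK normrN (mulrC (sigmoid (- z))).
rewrite ger0_norm // -mulrA mulr_ile1 ?sigmoid_ge0 ?sigmoid_le1 ?sigmoidN_mul_le1 //.
by rewrite mulr_ge0 ?sigmoid_ge0.
Qed.

Lemma is_derive_tanh_half z : is_derive z 1 tanh_half (2 * expR z / (1 + expR z) ^+ 2).
Proof.
have e1 : 1 + expR z != 0 by rewrite gt_eqF // addr_gt0 ?expR_gt0.
have hf : is_derive z 1 (cst 1 + expR) (0 + expR z) by apply: is_deriveD.
have hinv := is_deriveV (e1 : (cst 1 + expR) z != 0) hf.
have -> : tanh_half = cst 1 - 2 *: (fun w => ((cst 1 + expR) w)^-1).
  by apply/funext => w; rewrite /tanh_half.
apply: is_derive_eq; rewrite /= add0r.
rewrite -[X in X = _]/(- (2 * (- (1 + expR z) ^- 2 * (0 + expR z)))) add0r.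
by field.
Qed.

Lemma tanh_half_secant z w :
  exists2 k, 0 <= k <= 2^-1 & tanh_half z - tanh_half w = k * (z - w).
Proof.
wlog zw : z w / w < z => [H|].
  case: (ltgtP w z) => [/H //|/H [k k01 e]|->]; last first.
    by exists 0; rewrite ?subrr ?mul0r // lexx invr_ge0 ler0n.
  by exists k => //; rewrite -opprB e -mulrN opprB.
have hc : {within `[w, z], continuous tanh_half}.
  apply/continuous_subspaceT => r.
  by apply/differentiable_continuous/derivable1_diffP; case: (is_derive_tanh_half r).
have [c _ ->] := MVT zw (fun r _ => is_derive_tanh_half r) hc.
exists (2 * expR c / (1 + expR c) ^+ 2) => //.
have e_gt0 := expR_gt0 c.
rewrite divr_ge0 ?mulr_ge0 ?sqr_ge0 ?(ltW e_gt0) //=.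
rewrite ler_pdivrMr ?exprn_gt0 ?addr_gt0 //.
have := sqr_ge0 (1 - expR c); rewrite !expr2; nra.
Qed.

Lemma tanh_half_mul_ge0 z : 0 <= tanh_half z * z.
Proof.
have e1 : 0 < 1 + expR z by rewrite addr_gt0 ?expR_gt0.
rewrite /tanh_half; case: (lerP 0 z) => z0.
  rewrite mulr_ge0 // subr_ge0 ler_pdivrMr // mul1r lerD2l -expR0 ler_expR //.
rewrite mulr_le0 ?(ltW z0) // subr_le0 ler_pdivlMr // mul1r lerD2l -expR0 ler_expR.
exact: ltW.
Qed.

End Sigmoid.

Section Gradients.
#[local] Set Implicit Arguments.
#[local] Unset Strict Implicit.
Context {R : realType}.
Implicit Types (p n : nat).

Lemma derive_along_line n (f : 'cV[R]_n -> R) (a v : 'cV[R]_n) :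
  'D_v f a = 'D_1 (fun h : R => f (h *: v + a)) 0.
Proof.
rewrite /derive; set g1 := fun h => h^-1 *: _; set g2 := fun h => h^-1 *: _.
suff -> : g1 = g2 by [].
by apply/funext => h; rewrite /g1 /g2 /= scale0r add0r addr0 [h *: 1]mulr1.
Qed.

Lemma is_derive_quadratic (a b c h0 : R) :
  is_derive h0 1 (fun h => h ^+ 2 * a + h * b + c) (2 * h0 * a + b).
Proof.
have -> : (fun h => h ^+ 2 * a + h * b + c) =
          (fun h => h * h) * cst a + ( *%R^~ b) + cst c.
  by apply/funext => h /=; rewrite expr2.
apply: is_derive_eq; rewrite /= scaler0 add0r addr0 [h0%:A]mulr1 [b%:A]mulr1.
by rewrite -[a *: _]/(a * (h0 + h0)); ring.
Qed.

Lemma is_derive_softplus_affine (c b h0 : R) :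
  is_derive h0 1 (fun h => ln (1 + expR (c + h * b))) (b * sigmoid (c + h0 * b)).
Proof.
have aff : is_derive h0 1 (fun h => c + h * b) b.
  have := is_derive_quadratic 0 b c h0.
  by under eq_fun do rewrite mulr0 add0r addrC; rewrite mulr0 add0r.
have hexp := is_derive1_comp (is_derive_expR _) aff.
have hpos : 0 < (cst 1 + (expR \o (fun h => c + h * b))) h0.
  by rewrite /= addr_gt0 ?expR_gt0.
have hg := is_deriveD (is_derive_cst (1 : R) h0 1) hexp.
have hl := is_derive1_comp (is_derive1_ln hpos) hg.
rewrite -[fun h => _]/(@ln R \o (cst 1 + (expR \o (fun h => c + h * b)))).
by apply: is_derive_eq; rewrite /= add0r /sigmoid mulrC mulrA (mulrC b) mulrC.
Qed.

Lemma Omega_line p (u v w e : 'cV[R]_p) h : Omega u v (h *: e + w) =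
  h ^+ 2 * dotc e e + h * (2 * dotc e w - 2 * dotc u e) + (dotc w w - 2 * dotc u w)
  + ln (1 + expR (- dotc v w + h * - dotc v e))
  + ln (1 + expR (dotc v w + h * dotc v e)).
Proof.
rewrite /Omega enorm_sqr !(dotcDl, dotcDr, dotcZl, dotcZr) (dotcC w e).
by congr (_ + ln (1 + expR _) + ln (1 + expR _)); ring.
Qed.

Lemma is_derive_Omega_line p (u v w e : 'cV[R]_p) (h0 : R) :
  is_derive h0 1 (fun h => Omega u v (h *: e + w))
    (2 * h0 * dotc e e + (2 * dotc e w - 2 * dotc u e)
     + - dotc v e * sigmoid (- dotc v w + h0 * - dotc v e)
     + dotc v e * sigmoid (dotc v w + h0 * dotc v e)).
Proof.
have := is_deriveD (is_deriveD
  (is_derive_quadratic (dotc e e) (2 * dotc e w - 2 * dotc u e) (dotc w w - 2 * dotc u w) h0)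
  (is_derive_softplus_affine (- dotc v w) (- dotc v e) h0))
  (is_derive_softplus_affine (dotc v w) (dotc v e) h0).
by under [X in is_derive _ _ X _]eq_fun do rewrite -Omega_line.
Qed.

Lemma grad_Omega p (u v w : 'cV[R]_p) :
  grad (Omega u v) w = 2 *: w - 2 *: u + tanh_half (dotc v w) *: v.
Proof.
apply/matrixP => i j; rewrite ord1 !mxE derive_along_line.
case: (is_derive_Omega_line u v w (delta_mx i 0) 0) => _ ->.
rewrite !(mulr0, mul0r, add0r, addr0) -sigmoid_subN.
by rewrite dotc_delta (dotcC u) (dotcC v) !dotc_delta; ring.
Qed.

Lemma grad_logloss n (a : 'cV[R]_n) (y : R) (th : 'cV[R]_n) :
  grad (fun th => logloss (dotc th a) y) th = (- y * sigmoid (- (y * dotc th a))) *: a.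
Proof.
apply/matrixP => i j; rewrite ord1 !mxE derive_along_line.
have -> : (fun h : R => logloss (dotc (h *: delta_mx i 0 + th) a) y) =
          (fun h => ln (1 + expR (- (y * dotc th a) + h * - (y * a i 0)))).
  apply/funext => h; rewrite /logloss dotcDl dotcZl dotc_delta.
  by congr (ln (1 + expR _)); ring.
case: (is_derive_softplus_affine (- (y * dotc th a)) (- (y * a i 0)) 0) => _ ->.
by rewrite mul0r addr0; ring.
Qed.

Lemma grad_Omega_min p (u v ws : 'cV[R]_p) :
  (forall w, Omega u v ws <= Omega u v w) -> grad (Omega u v) ws = 0.
Proof.
move=> ws_min; apply/matrixP => i j; rewrite !mxE derive_along_line.
have h0 : (0 : R) \in `]-1, 1[ by rewrite in_itv /=; apply/andP; split; lra.
have hd t : t \in `]-1, 1[ ->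
    derivable (fun h : R => Omega u v (h *: delta_mx i 0 + ws)) t 1.
  by move=> _; case: (is_derive_Omega_line u v ws (delta_mx i 0) t).
have hm t : t \in `]-1, 1[ ->
    Omega u v (0 *: delta_mx i 0 + ws) <= Omega u v (t *: delta_mx i 0 + ws).
  by move=> _; rewrite scale0r add0r; apply: ws_min.
have le_N11 : (-1 : R) <= 1 by lra.
by case: (derive1_at_min le_N11 hd h0 hm) => _ ->.
Qed.

End Gradients.

Section GradientDescent.
#[local] Set Implicit Arguments.
#[local] Unset Strict Implicit.
Context {R : realType}.
Implicit Types (p : nat) (g a : R).

Lemma gd_step_Omega_lipschitz p (u v w w' : 'cV[R]_p) g :
  0 < g -> 0 <= 1 - 2 * g -> g * dotc v v <= 4 * (1 - 2 * g) ->
  enorm ((w - g *: grad (Omega u v) w) - (w' - g *: grad (Omega u v) w'))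
    <= (1 - 2 * g) * enorm (w - w').
Proof.
move=> g_gt0 a_ge0 gv_le; rewrite !grad_Omega.
have [k /andP[k_ge0 k_le] th_secant] := tanh_half_secant (dotc v w) (dotc v w').
set a := 1 - 2 * g in a_ge0 gv_le *; set d := w - w'; set c := dotc v d.
have -> : w - g *: (2 *: w - 2 *: u + tanh_half (dotc v w) *: v)
          - (w' - g *: (2 *: w' - 2 *: u + tanh_half (dotc v w') *: v))
          = a *: d - (g * k * c) *: v.
  have -> : tanh_half (dotc v w) = tanh_half (dotc v w') + k * c.
    by rewrite /c /d dotcBr -th_secant; ring.
  by apply/matrixP => i j; rewrite /a /d !mxE; ring.
clearbody d; rewrite -[X in _ <= X * _](ger0_norm a_ge0) -enormZ; apply: ler_enorm.
rewrite !(dotcBl, dotcBr, dotcZl, dotcZr) (dotcC d v) -/c -subr_ge0.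
(* the cross term wins because [tanh_half] is 1/2-Lipschitz and [g |v|^2 <= 4 a] *)
have gkv_le : g * k * dotc v v <= 2 * a.
  apply: le_trans (_ : g * 2^-1 * dotc v v <= _); last by lra.
  by rewrite ler_wpM2r ?dotc_ge0 // ler_wpM2l // ltW.
have -> : a * (a * dotc d d) - (a * (a * dotc d d) - g * k * c * (a * c)
          - g * k * c * (a * c - g * k * c * dotc v v))
          = (g * k) * c ^+ 2 * (2 * a - g * k * dotc v v) by ring.
apply: mulr_ge0; last by rewrite subr_ge0.
by rewrite mulr_ge0 ?sqr_ge0 // mulr_ge0 // ltW.
Qed.

Lemma iter_contraction p (F : 'cV[R]_p -> 'cV[R]_p) a (ws w0 : 'cV[R]_p) (T : nat) :
  0 <= a -> (forall w w', enorm (F w - F w') <= a * enorm (w - w')) -> F ws = ws ->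
  enorm (iter T F w0 - ws) <= a ^+ T * enorm (w0 - ws).
Proof.
move=> a_ge0 F_lip F_ws; elim: T => [|T IH]; first by rewrite expr0 mul1r.
rewrite iterS -{1}F_ws; apply: le_trans (F_lip _ _) _.
by rewrite exprS -mulrA; apply: ler_wpM2l.
Qed.

Lemma grad_Omega_eq0_enorm p (u v ws : 'cV[R]_p) :
  grad (Omega u v) ws = 0 -> enorm ws <= enorm u.
Proof.
rewrite grad_Omega => /(congr1 (dotc ws)).
rewrite dotc0r !(dotcBr, dotcDr, dotcZr) (dotcC ws v) => ws_stat.
have ws_le : enorm ws ^+ 2 <= enorm u * enorm ws.
  have := tanh_half_mul_ge0 (dotc v ws); have := dotc_le_enorm u ws.
  rewrite enorm_sqr (dotcC u); lra.
have [ws0|ws_neq0] := eqVneq (enorm ws) 0; first by rewrite ws0 enorm_ge0.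
have ws_gt0 : 0 < enorm ws by rewrite lt_def ws_neq0 enorm_ge0.
by rewrite -(ler_pM2r ws_gt0) -expr2.
Qed.

End GradientDescent.

Section CholeskyBounds.
#[local] Set Implicit Arguments.
#[local] Unset Strict Implicit.
Context {R : realType}.
Implicit Types (n : nat).

Lemma cholesky_unitmx n (A L : 'M[R]_n) : is_cholesky A L -> L \in unitmx.
Proof.
case=> L_trig [L_diag _]; rewrite unitmxE det_trig // unitfE.
by apply: lt0r_neq0; apply: prodr_gt0 => i _.
Qed.

Lemma dotc_invmx_cholesky n (A L : 'M[R]_n) (lam : R) (z : 'cV[R]_n) :
  0 < lam -> is_cholesky A L -> (forall q, lam * dotc q q <= dotc q (A *m q)) ->
  dotc (invmx L *m z) (invmx L *m z) <= dotc z z / lam.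
Proof.
move=> lam_gt0 cholL A_ge; have L_unit := cholesky_unitmx cholL.
case: cholL => _ [_ LLA].
set w := invmx L *m z; set q := invmx L^T *m w.
have Lq : L^T *m q = w by rewrite /q mulKVmx ?unitmx_tr.
have Aq : A *m q = z by rewrite -LLA -mulmxA Lq /w mulKVmx.
have ww : dotc w w = dotc q z by rewrite -{1}Lq dotc_mulmxl trmxK -/w /w mulKVmx.
have := A_ge q; rewrite Aq ww ler_pdivlMr // -!enorm_sqr.
have := dotc_le_enorm q z; have := enorm_ge0 q; have := enorm_ge0 z.
set a := enorm q; set b := enorm z => b_ge0 a_ge0 qz_le qq_le.
(* from [lam a^2 <= q.z <= a b] we get [lam a <= b], hence [q.z <= a b <= b^2 / lam] *)
have : lam * (lam * a ^+ 2) <= lam * (a * b) by rewrite ler_pM2l // (le_trans qq_le).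
have := sqr_ge0 (b - lam * a); rewrite !expr2 in qq_le *; nra.
Qed.

Lemma enorm_invmx_cholesky n (A L : 'M[R]_n) (lam : R) (z : 'cV[R]_n) :
  0 < lam -> is_cholesky A L -> (forall q, lam * dotc q q <= dotc q (A *m q)) ->
  enorm (invmx L *m z) <= enorm z / Num.sqrt lam.
Proof.
move=> lam_gt0 cholL A_ge; rewrite /enorm -sqrtrV ?(ltW lam_gt0) // -sqrtrM ?dotc_ge0 //.
exact: ler_wsqrtr (dotc_invmx_cholesky _ lam_gt0 cholL A_ge).
Qed.

Lemma enorm_uvec n (W : 'M[R]_(n, 2)) q (U : 'M[R]_(2, q)) sig (k : 'I_2) :
  is_econ_eig (W^T *m W) U sig -> enorm (uvec U sig k) = enorm (W *m delta_mx k 0).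
Proof.
case=> _ [sig_gt0 WW]; congr Num.sqrt.
set D := diag_mx (map_mx Num.sqrt sig).
have DD : D *m D = diag_mx sig.
  rewrite /D mulmx_diag; congr diag_mx; apply/matrixP => i j.
  by rewrite !mxE ord1 -expr2 sqr_sqrtr // ltW.
rewrite /uvec -/D !dotcE !trmx_mul !trmxK /D tr_diag_mx -/D.
rewrite -!mulmxA [D *m (D *m _)]mulmxA DD.
by rewrite [W^T *m (W *m _)]mulmxA WW -!mulmxA.
Qed.

Lemma row_mx_mul_delta0 n (b c : 'cV[R]_n) : row_mx b c *m delta_mx (0 : 'I_2) 0 = b.
Proof.
apply/matrixP => i j; rewrite -colE mxE ord1.
have -> : (0 : 'I_2) = lshift 1 (0 : 'I_1) by apply: val_inj.
exact: row_mxEl.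
Qed.

Lemma row_mx_mul_delta1 n (b c : 'cV[R]_n) : row_mx b c *m delta_mx (1 : 'I_2) 0 = c.
Proof.
apply/matrixP => i j; rewrite -colE mxE ord1.
have -> : (1 : 'I_2) = rshift 1 (0 : 'I_1) by apply: val_inj.
exact: row_mxEr.
Qed.

End CholeskyBounds.

Section AioliBounds.
#[local] Set Implicit Arguments.
#[local] Unset Strict Implicit.
Context {R : realType}.

(* The scalar factor of [x s] in the [s]-th summand of [bvec]. *)
Lemma logistic_coef_le2 (y z c : R) : y = 1 \/ y = -1 -> 1 <= c ->
  `|(expR (y * z) / c * (- y * sigmoid (- (y * z)) * z) - 1) * (- y * sigmoid (- (y * z)))|
    <= 2.
Proof.
move=> y_pm1 c_ge1; have c_gt0 : 0 < c by apply: lt_le_trans c_ge1.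
set w := y * z.
have -> : (expR w / c * (- y * sigmoid (- w) * z) - 1) * (- y * sigmoid (- w))
          = y * (sigmoid w * sigmoid (- w) * w / c + sigmoid (- w)).
  by rewrite -(expR_sigmoidN w) /w; case: y_pm1 => ->; ring.
have y_abs : `|y| = 1 by case: y_pm1 => ->; rewrite ?normrN normr1.
rewrite normrM y_abs mul1r (_ : 2 = 1 + 1) //; apply: le_trans (ler_normD _ _) _.
apply: lerD; last by rewrite ger0_norm ?sigmoid_ge0 ?sigmoid_le1.
rewrite normrM normfV (gtr0_norm c_gt0) ler_pdivrMr // mul1r.
rewrite normrM ger0_norm ?mulr_ge0 ?sigmoid_ge0 //.
apply: le_trans c_ge1.
exact: sigmoid_sigmoidN_abs_le1.
Qed.

Variables (d : nat) (lam Rb B : R) (x : nat -> 'cV[R]_d) (y : nat -> R).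
Variable thhat : nat -> 'cV[R]_d.
Hypotheses (Rb_ge0 : 0 <= Rb) (B_ge0 : 0 <= B).

Lemma dotc_Amat_ge (t : nat) (q : 'cV[R]_d) :
  lam * dotc q q <= dotc q (Amat lam Rb B x y thhat t *m q).
Proof.
rewrite /Amat mulmxDl mul_scalar_mx -scalemxAl dotcDr !dotcZr lerDl.
rewrite mulr_ge0 ?invr_ge0 // mulmx_suml.
elim/big_ind: _ => [|X Y X_ge0 Y_ge0|s _]; first by rewrite dotc0r.
  by rewrite dotcDr addr_ge0.
rewrite -scalemxAl dotcZr mulr_ge0 //.
  by rewrite /eta_s divr_ge0 ?expR_ge0 // addr_ge0 // mulr_ge0.
by rewrite -mulmxA dotcC dotc_mulmxl dotc_ge0.
Qed.

Lemma enorm_bvec_summand_le (s : nat) :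
  enorm (x s) <= Rb -> y s = 1 \/ y s = -1 ->
  enorm ((eta_s lam Rb B x y thhat s * dotc (g_s lam Rb B x y thhat s) (thhat s) - 1)
         *: g_s lam Rb B x y thhat s) <= 2 * Rb.
Proof.
move=> x_le y_pm1; rewrite /g_s /loss_s grad_logloss dotcZl (dotcC (x s)).
rewrite scalerA enormZ /eta_s; apply: le_trans (ler_wpM2l (normr_ge0 _) x_le) _.
rewrite ler_wpM2r // logistic_coef_le2 //.
by rewrite lerDl mulr_ge0.
Qed.

Lemma enorm_bvec_le (t : nat) :
  (forall s, (1 <= s)%N -> enorm (x s) <= Rb) ->
  (forall s, (1 <= s)%N -> y s = 1 \/ y s = -1) ->
  enorm (bvec lam Rb B x y thhat t) <= Rb * t%:R.
Proof.
move=> x_le y_pm1; rewrite /bvec enormZ ger0_norm ?invr_ge0 //.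
apply: le_trans (ler_wpM2l _ (enorm_sum _ _ _)) _; first by rewrite invr_ge0.
rewrite (le_trans (ler_wpM2l _ (ler_sum_nat (G := fun _ => 2 * Rb) _))) ?invr_ge0 //.
  by move=> s /andP[s_ge1 _]; apply: enorm_bvec_summand_le; [exact: x_le | exact: y_pm1].
rewrite sumr_const_nat -[2 * Rb *+ _]mulr_natr !mulrA mulVf ?pnatr_eq0 // mul1r.
by rewrite ler_wpM2l // ler_nat leq_subr.
Qed.

Variables (t : nat) (L : 'M[R]_d) (q : nat) (U : 'M[R]_(2, q)) (sig : 'rV[R]_q).
Hypotheses (lam_gt0 : 0 < lam) (cholL : is_cholesky (Amat lam Rb B x y thhat t) L).
Hypothesis eigW :
  is_econ_eig ((Wmat lam Rb B x y thhat t L)^T *m Wmat lam Rb B x y thhat t L) U sig.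

Lemma enorm_uvec_le (k : 'I_2) : enorm (uvec U sig k)
  <= enorm (row_mx (bvec lam Rb B x y thhat t) (x t) *m delta_mx k 0) / Num.sqrt lam.
Proof.
rewrite (enorm_uvec _ eigW) /Wmat -mulmxA.
exact: enorm_invmx_cholesky lam_gt0 cholL (dotc_Amat_ge t).
Qed.

Lemma enorm_uvec0_le :
  (forall s, (1 <= s)%N -> enorm (x s) <= Rb) ->
  (forall s, (1 <= s)%N -> y s = 1 \/ y s = -1) ->
  enorm (uvec U sig 0) <= Rb * t%:R / Num.sqrt lam.
Proof.
move=> x_le y_pm1; apply: le_trans (enorm_uvec_le 0) _.
rewrite row_mx_mul_delta0 ler_pM2r ?invr_gt0 ?sqrtr_gt0 //.
exact: enorm_bvec_le.
Qed.

Lemma dotc_uvec1_le : enorm (x t) <= Rb -> dotc (uvec U sig 1) (uvec U sig 1) <= Rb ^+ 2 / lam.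
Proof.
move=> xt_le; rewrite -enorm_sqr -(sqr_sqrtr (ltW lam_gt0)) -expr_div_n.
apply: lerXn2r; rewrite ?nnegrE ?enorm_ge0 ?divr_ge0 ?sqrtr_ge0 //.
apply: le_trans (enorm_uvec_le 1) _.
by rewrite row_mx_mul_delta1 ler_pM2r ?invr_gt0 ?sqrtr_gt0.
Qed.

End AioliBounds.

Section StepSize.
#[local] Set Implicit Arguments.
#[local] Unset Strict Implicit.
Context {R : realType}.

Lemma geometric_decay (a g A : R) (T : nat) :
  0 <= a -> a <= expR (- g) -> 0 < A -> ln A <= g * T%:R -> a ^+ T * A <= 1.
Proof.
move=> a_ge0 a_le A_gt0 lnA_le.
have aT_le : a ^+ T <= expR (- g) ^+ T by apply: lerXn2r; rewrite ?nnegrE ?expR_ge0.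
rewrite -ler_pdivlMr // mul1r; apply: le_trans aT_le _.
by rewrite -expRM_natl -(lnK A_gt0) -expRN ler_expR; lra.
Qed.

Lemma step_size_inv (lam Rb gam : R) : 0 < lam -> gam = lam / (4 * lam + Rb ^+ 2) ->
  gam^-1 = 4 + Rb ^+ 2 / lam.
Proof.
move=> lam_gt0 ->; have Rb2_ge0 : 0 <= Rb ^+ 2 by exact: sqr_ge0.
by field; rewrite !gt_eqF //; lra.
Qed.

Lemma step_size_cond (lam Rb gam : R) : 0 < lam -> gam = lam / (4 * lam + Rb ^+ 2) ->
  0 <= 1 - 2 * gam /\ gam * (Rb ^+ 2 / lam) <= 4 * (1 - 2 * gam).
Proof.
move=> lam_gt0 ->; have Rb2_ge0 : 0 <= Rb ^+ 2 by exact: sqr_ge0.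
have den_gt0 : 0 < 4 * lam + Rb ^+ 2 by lra.
have -> : 1 - 2 * (lam / (4 * lam + Rb ^+ 2)) = (2 * lam + Rb ^+ 2) / (4 * lam + Rb ^+ 2).
  by field; rewrite gt_eqF.
have -> : lam / (4 * lam + Rb ^+ 2) * (Rb ^+ 2 / lam) = Rb ^+ 2 / (4 * lam + Rb ^+ 2).
  by field; rewrite !gt_eqF.
split; first by apply: divr_ge0; lra.
by rewrite mulrA ler_pM2r ?invr_gt0 //; lra.
Qed.

End StepSize.

Theorem lemma2 (R : realType) (d : nat) (lam Rb B : R)
  (x : nat -> 'cV[R]_d) (y : nat -> R) (thhat : nat -> 'cV[R]_d) (t : nat)
  (L : 'M[R]_d) (U : 'M[R]_(2, \rank (Wmat lam Rb B x y thhat t L)))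
  (sig : 'rV[R]_(\rank (Wmat lam Rb B x y thhat t L)))
  (omstar : 'cV[R]_(\rank (Wmat lam Rb B x y thhat t L)))
  (eps gam : R) (T : nat) :
  (0 < d)%N -> 0 < lam -> 0 < Rb -> 0 < B ->
  (forall s, (1 <= s)%N -> enorm (x s) <= Rb) ->
  (forall s, (1 <= s)%N -> y s = 1 \/ y s = -1) ->
  (1 <= t)%N ->
  is_aioli_forecasts lam Rb B x y thhat ->
  is_cholesky (Amat lam Rb B x y thhat t) L ->
  is_econ_eig ((Wmat lam Rb B x y thhat t L)^T *m Wmat lam Rb B x y thhat t L) U sig ->
  (forall w, Omega (uvec U sig 0) (uvec U sig 1) omstar
             <= Omega (uvec U sig 0) (uvec U sig 1) w) ->
  0 < eps -> 0 < gam ->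
  gam = lam / (4 * lam + Rb ^+ 2) ->
  (4 + Rb ^+ 2 / lam) * ln (Rb * t%:R / (eps * Num.sqrt lam)) <= T%:R ->
  enorm (gd_iter (Omega (uvec U sig 0) (uvec U sig 1)) gam T - omstar) <= eps.
Proof.
move=> _ lam_gt0 Rb_gt0 B_gt0 x_le y_pm1 t_ge1 _ cholL eigW omstar_min eps_gt0 gam_gt0 gamE T_ge.
have [Rb_ge0 B_ge0] := (ltW Rb_gt0, ltW B_gt0).
set u := uvec U sig 0; set v := uvec U sig 1.
have u_le := enorm_uvec0_le Rb_ge0 B_ge0 lam_gt0 cholL eigW x_le y_pm1.
have v_le := dotc_uvec1_le Rb_ge0 B_ge0 lam_gt0 cholL eigW (x_le t t_ge1).
have [a_ge0 gam_cond] := step_size_cond lam_gt0 gamE.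
have gam_v : gam * dotc v v <= 4 * (1 - 2 * gam).
  exact: le_trans (ler_wpM2l (ltW gam_gt0) v_le) gam_cond.
have omstar_fix : omstar - gam *: grad (Omega u v) omstar = omstar.
  by rewrite grad_Omega_min // scaler0 subr0.
have := iter_contraction (F := fun w => w - gam *: grad (Omega u v) w) 0 T a_ge0
  (fun w w' => gd_step_Omega_lipschitz u w w' gam_gt0 a_ge0 gam_v) omstar_fix.
rewrite sub0r enormN => /le_trans; apply.
set A := Rb * t%:R / (eps * Num.sqrt lam).
have sqrt_lam_gt0 : 0 < Num.sqrt lam by rewrite sqrtr_gt0.
have A_gt0 : 0 < A by rewrite divr_gt0 ?mulr_gt0 ?ltr0n.
have omstar_le : enorm omstar <= eps * A.
  have -> : eps * A = Rb * t%:R / Num.sqrt lam by rewrite /A; field; rewrite !gt_eqF.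
  exact: le_trans (grad_Omega_eq0_enorm (grad_Omega_min omstar_min)) u_le.
apply: le_trans (ler_wpM2l (exprn_ge0 _ a_ge0) omstar_le) _.
rewrite mulrCA ger_pMr // (geometric_decay (g := gam)) //.
  by have := expR_ge1Dx (- gam); lra.
have := ler_wpM2l (ltW gam_gt0) T_ge.
by rewrite -(step_size_inv lam_gt0 gamE) mulrA mulfV ?gt_eqF // mul1r.
Qed.
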